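(* Let $(y_i)_{i\in\mathbb{Z}}$ be independent indeterminates. Define rational functions $y_i^{(j)}$ for $i\in\mathbb{Z}$, $j\ge -1$ by $y_i^{(-1)}=y_i^{(0)}=y_i$ and, for $j\ge1$, $$y_i^{(j)}=\frac{y_{i-1}^{(j-1)}\,y_{i+1}^{(j-1)}+1}{y_i^{(j-2)}}.$$ Then for all $i\in\mathbb{Z}$ and $j\ge1$, $$y_i^{(j)}=\frac{P(\tilde T_{i-j+1}\cup\tilde T_{i-j+2}\cup\dots\cup\tilde T_{i+j-1})}{y_{i-j+1}y_{i-j+2}\cdots y_{i+j-1}},$$ where $\tilde T_{i-j+1}\cup\dots\cup\tilde T_{i+j-1}$ denotes the ladder graph of the $2j-1$ tiles $\tilde T_{i-j+1},\dots,\tilde T_{i+j-1}$ in this order.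
   Context: For $k\in\mathbb{Z}$, the tile $\tilde T_k$ is a square whose northern edge has weight $y_{k+1}$, southern edge weight $y_{k-1}$, and eastern and western edges weight $1$. The ladder graph of a tile sequence $S_1,\dots,S_m$ (tile $S_k$ with north weight $a_k$, south weight $b_k$) is the graph obtained by gluing the squares in a row (east edge of $S_k$ identified with west edge of $S_{k+1}$): vertices $u_0,\dots,u_m,v_0,\dots,v_m$, edges $u_{k-1}u_k$ of weight $a_k$, $v_{k-1}v_k$ of weight $b_k$ ($1\le k\le m$), and $u_kv_k$ of weight $1$ ($0\le k\le m$). For a weighted graph $G$, $P(G)=\sum_M\prod_{e\in M}w_e$, summed over all perfect matchings $M$ of $G$. *)

From HB Require Import structures.
From mathcomp Require Import all_boot all_order all_algebra.
From mathcomp Require Import mpoly.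
Set Implicit Arguments. Unset Strict Implicit. Unset Printing Implicit Defensive.
Import Order.TTheory GRing.Theory Num.Theory.
Local Open Scope ring_scope.

(* Thus y_i generate a copy of the rational function field
   Q(y_i : i in Z) (or F_p(...)), i.e. the y_i are independent indeterminates. *)
Definition alg_indep (F : fieldType) (y : int -> F) : Prop :=
  forall (n : nat) (idx : 'I_n -> int), injective idx ->
  forall p : {mpoly int[n]}, p != 0 ->
    mmap (fun z : int => z%:~R) (fun k => y (idx k)) p != 0.

(* Ypair y n = (y^(n-1), y^(n)), with y^(-1) = y^(0) = y and
   y^(j) = (y^(j-1)_{i-1} y^(j-1)_{i+1} + 1) / y^(j-2)_i. *)
Fixpoint Ypair (F : fieldType) (y : int -> F) (n : nat) : (int -> F) * (int -> F) :=
  match n with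
  | 0%N => (y, y)
  | n'.+1 => let (a, b) := Ypair y n' in
             (b, fun i => (b (i - 1) * b (i + 1) + 1) / a i)
  end.

Definition ycl (F : fieldType) (y : int -> F) (j : nat) (i : int) : F :=
  (Ypair y j).2 i.

(* Ladder graph of m tiles S_1..S_m (indexed here by k : 'I_m, i.e. S_{k+1}),
   north weights a, south weights b.
   Vertices: (true, k) = u_k, (false, k) = v_k, k = 0..m. *)
Definition lvert (m : nat) := (bool * 'I_m.+1)%type.
Definition ledge (m : nat) := ('I_m + 'I_m + 'I_m.+1)%type.

Definition lends (m : nat) (e : ledge m) : lvert m * lvert m :=
  match e with
  | inl (inl k) => ((true, inord k), (true, inord k.+1))
  | inl (inr k) => ((false, inord k), (false, inord k.+1))
  | inr k => ((true, k), (false, k))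
  end.

Definition lweight (R : ringType) (m : nat) (a b : 'I_m -> R) (e : ledge m) : R :=
  match e with
  | inl (inl k) => a k
  | inl (inr k) => b k
  | inr _ => 1
  end.

Definition covers (m : nat) (e : ledge m) (x : lvert m) : bool :=
  (x == (lends e).1) || (x == (lends e).2).

Definition perfect_matching (m : nat) (M : {set ledge m}) : bool :=
  [forall x : lvert m, #|[set e in M | covers e x]| == 1%N].

Definition Pladder (R : comRingType) (m : nat) (a b : 'I_m -> R) : R :=
  \sum_(M : {set ledge m} | perfect_matching M) \prod_(e in M) lweight a b e.

(* Ladder graph of tiles T~_s, T~_{s+1}, ..., T~_{s+m-1}; tile T~_t has north
   weight y_{t+1}, south weight y_{t-1}. *)
Definition Ptiles (R : comRingType) (y : int -> R) (s : int) (m : nat) : R :=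
  Pladder (fun k : 'I_m => y (s + (k : nat)%:Z + 1))
          (fun k : 'I_m => y (s + (k : nat)%:Z - 1)).

From mathcomp Require Import all_boot all_order all_algebra.
From mathcomp Require Import mpoly.
From mathcomp Require Import ring zify.
Import GRing.Theory.
Set Implicit Arguments. Unset Strict Implicit. Unset Printing Implicit Defensive.
Local Open Scope ring_scope.

(* A perfect matching of a ladder is determined by the set of positions where
   it uses both horizontal edges, and these sets are exactly the sets with no
   two adjacent positions.  Hence P of a ladder of m tiles is the continuant
   K_(m+1) of the tile weights c_k = (north weight) * (south weight).  The
   continuant identity
     K_(m+4)(c) K_m(c'') - K_(m+2)(c) K_(m+2)(c'') = (-1)^m c_1 c_2 ... c_(m+1),
   with c'' the weights shifted by two tiles, becomes, after dividing by the
   products of the y's, exactly the recurrence defining y^(j) (m is even).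
   Algebraic independence of the y's keeps every denominator nonzero. *)

Lemma nat_ind2 (P : nat -> Prop) :
  P 0%N -> P 1%N -> (forall n, P n -> P n.+1 -> P n.+2) -> forall n, P n.
Proof.
move=> P0 P1 PS n; suff [] : P n /\ P n.+1 by [].
by elim: n => [|n [IHn IHSn]]; split => //; apply: PS.
Qed.

Fixpoint continuant (R : comPzRingType) (c : nat -> R) (n : nat) : R :=
  if n is n'.+1 then
    if n' is n''.+1 then continuant c n' + c n'' * continuant c n'' else 1
  else 1.
Arguments continuant : simpl never.

Lemma continuant0 (R : comPzRingType) (c : nat -> R) : continuant c 0 = 1.
Proof. by []. Qed.

Lemma continuant1 (R : comPzRingType) (c : nat -> R) : continuant c 1 = 1.
Proof. by []. Qed.

Lemma continuantSS (R : comPzRingType) (c : nat -> R) n :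
  continuant c n.+2 = continuant c n.+1 + c n * continuant c n.
Proof. by []. Qed.

Lemma eq_continuant (R : comPzRingType) (c d : nat -> R) n :
  (forall k, (k.+2 <= n)%N -> c k = d k) -> continuant c n = continuant d n.
Proof.
elim/nat_ind2: n => [||n IHn IHSn] // cd.
by rewrite !continuantSS cd // IHn ?IHSn // => k kn; apply: cd; lia.
Qed.

Lemma continuant_rmorph (R S : comPzRingType) (f : {rmorphism R -> S}) c n :
  f (continuant c n) = continuant (f \o c) n.
Proof.
elim/nat_ind2: n => [||n IHn IHSn]; rewrite ?rmorph1 //.
by rewrite !continuantSS rmorphD rmorphM IHn IHSn.
Qed.

Lemma continuant_zero (R : comPzRingType) n : continuant (fun=> 0 : R) n = 1.
Proof. by elim/nat_ind2: n => [||n _ IHSn] //; rewrite continuantSS IHSn mul0r addr0. Qed.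

Lemma continuant_det (R : comPzRingType) (c : nat -> R) m :
  let c2 k := c k.+2 in
  continuant c m.+4 * continuant c2 m - continuant c m.+2 * continuant c2 m.+2
  = (-1) ^+ m * c 1%N * \prod_(k < m) c2 k.
Proof.
move=> c2.
have det3 n : continuant c n.+3 * continuant c2 n - continuant c n.+2 * continuant c2 n.+1
    = (-1) ^+ n * c 1%N * \prod_(k < n) c2 k.
  elim: n => [|n IHn]; first by rewrite big_ord0 !continuantSS !continuant0 !continuant1; ring.
  rewrite (continuantSS c n.+2) (continuantSS c2 n) big_ord_recr exprS /= -/(c2 n).
  transitivity (- c2 n * (continuant c n.+3 * continuant c2 n
                          - continuant c n.+2 * continuant c2 n.+1)); first by ring.
  by rewrite IHn; ring.
rewrite -det3 (continuantSS c m.+2) (continuantSS c2 m) /c2; ring.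
Qed.

Definition no_adjacent (m : nat) (H : {set 'I_m}) : bool :=
  [forall h1 in H, forall h2 in H, (h1 : nat).+1 != h2].

Lemma no_adjacentP m (H : {set 'I_m}) :
  reflect {in H &, forall h1 h2 : 'I_m, (h1 : nat).+1 != h2} (no_adjacent H).
Proof.
apply: (iffP forall_inP) => [nH h1 h2 h1H h2H | nH h1 h1H].
  by move/forall_inP: (nH h1 h1H); apply.
by apply/forall_inP => h2; apply: nH.
Qed.

Section NoAdjacentSum.
Variables (R : comPzRingType) (m : nat) (c : nat -> R).

(* Restricting to elements below [q.-1] gives the partial sums that satisfy
   the continuant recursion in [q]. *)
Let sparse_sum (q : nat) : R :=
  \sum_(H : {set 'I_m} | no_adjacent H && [forall h in H, ((h : nat).+2 <= q)%N])
    \prod_(k in H) c k.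

Let sparse_sum_small q : (q <= 1)%N -> sparse_sum q = 1.
Proof.
move=> q1; rewrite /sparse_sum (eq_bigl (pred1 set0)) ?big_pred1_eq ?big_set0 //.
move=> H /=; apply/idP/eqP => [/andP[_ /forall_inP bH] | ->].
  by apply/setP => h; rewrite inE; apply/negbTE/negP => /bH; lia.
by apply/andP; split; [apply/no_adjacentP => h1 h2 | apply/forall_inP => h]; rewrite inE.
Qed.

Let sparse_sumSS q : (q < m)%N -> sparse_sum q.+2 = sparse_sum q.+1 + c q * sparse_sum q.
Proof.
move=> qm; set oq : 'I_m := Ordinal qm.
have oqE h : (h == oq) = ((h : nat) == q) by rewrite -val_eqE.
rewrite /sparse_sum (bigID (fun H : {set 'I_m} => oq \in H)) /= addrC.
congr (_ + _).
  apply: eq_bigl => H; rewrite -andbA; congr (_ && _); apply/idP/idP.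
    case/andP=> /forall_inP bH oH; apply/forall_inP => h hH.
    have hq : (h : nat) != q by rewrite -oqE; apply: contraNneq oH => <-.
    by move: (bH h hH) hq; lia.
  move/forall_inP => bH; apply/andP; split.
    by apply/forall_inP => h /bH; lia.
  by apply/negP => /bH /=; lia.
rewrite (reindex_onto (fun H => oq |: H) (fun H => H :\ oq)); last first.
  by move=> H /andP[_ oH]; rewrite setD1K.
rewrite big_distrr /=; apply: eq_big => [H | H /andP[_ /eqP <-]]; last first.
  by rewrite big_setU1 //= !inE eqxx.
apply/idP/idP.
  case/andP=> /andP[/andP[/no_adjacentP nH /forall_inP bH] _] /eqP HE.
  have oH : oq \notin H by rewrite -HE !inE eqxx.
  apply/andP; split.
    by apply/no_adjacentP => h1 h2 h1H h2H; apply: nH; rewrite inE ?h1H ?h2H orbT.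
  apply/forall_inP => h hH.
  have hq : (h : nat) != q by rewrite -oqE; apply: contraNneq oH => <-.
  have := nH h oq; rewrite !inE hH eqxx orbT => /(_ isT isT) /= hq1.
  by move: (bH h); rewrite inE hH orbT => /(_ isT); lia.
case/andP=> /no_adjacentP nH /forall_inP bH.
have oH : oq \notin H by apply/negP => /bH /=; lia.
rewrite setU1K // eqxx andbT setU11 andbT; apply/andP; split.
  apply/no_adjacentP => h1 h2; rewrite !inE.
  case/orP=> [/eqP-> | /[dup] h1H /bH h1q]; case/orP=> [/eqP-> | /[dup] h2H /bH h2q] /=;
    try lia; exact: nH.
apply/forall_inP => h; rewrite !inE => /orP[/eqP-> /= | /bH]; lia.
Qed.

Lemma sum_no_adjacent :
  \sum_(H : {set 'I_m} | no_adjacent H) \prod_(k in H) c k = continuant c m.+1.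
Proof.
have sparse_cont q : (q <= m.+1)%N -> sparse_sum q = continuant c q.
  elim/nat_ind2: q => [||q IHq IHSq] qm; try exact: sparse_sum_small.
  by rewrite sparse_sumSS ?continuantSS ?IHq ?IHSq //; lia.
rewrite -sparse_cont //; apply: eq_bigl => H.
by case: no_adjacent => //=; apply/esym/forall_inP => h _; exact: ltn_ord.
Qed.

End NoAdjacentSum.

Section LadderMatchings.
Variable m : nat.
Implicit Types (M : {set ledge m}) (H : {set 'I_m}).

Definition rail (top : bool) (k : 'I_m) : ledge m :=
  if top then inl (inl k) else inl (inr k).

Lemma rail_inj b b' (k k' : 'I_m) : rail b k = rail b' k' -> b = b' /\ k = k'.
Proof. by case: b; case: b' => -[]. Qed.

Lemma rail_neq_rung b (k : 'I_m) k0 : rail b k != inr k0.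
Proof. by case: b. Qed.

Lemma covers_rail b (k : 'I_m) b' (k0 : 'I_m.+1) :
  covers (rail b k) (b', k0) = (b' == b) && (((k0 : nat) == k) || ((k0 : nat) == k.+1)).
Proof.
have k0k : (k0 == inord k) = ((k0 : nat) == k).
  by rewrite -val_eqE /= inordK // ltnW // ltnS ltn_ord.
have k0Sk : (k0 == inord k.+1) = ((k0 : nat) == k.+1).
  by rewrite -val_eqE /= inordK // ltnS ltn_ord.
by case: b; rewrite /covers /= !xpair_eqE k0k k0Sk; case: b'.
Qed.

Lemma covers_rung (k : 'I_m.+1) b' (k0 : 'I_m.+1) :
  covers (inr k : ledge m) (b', k0) = (k0 == k).
Proof. by rewrite /covers /= !xpair_eqE; case: b'; rewrite ?orbF. Qed.

Lemma perfect_matchingP M :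
  reflect (forall x, exists e, [/\ e \in M, covers e x & {in M, forall e', covers e' x -> e' = e}])
          (perfect_matching M).
Proof.
apply: (iffP forallP) => [pmM x | pmM x].
  have [e /setP Me] := cards1P (pmM x); exists e.
  move: (Me e); rewrite !inE eqxx => /andP[eM ce]; split => // e' e'M ce'.
  by move: (Me e'); rewrite !inE e'M ce' => /esym/eqP.
have [e [eM ce Ue]] := pmM x; apply/cards1P; exists e.
by apply/setP => e'; rewrite !inE; apply/andP/eqP => [[]|->]; [exact: Ue | ].
Qed.

Lemma pm_covers_uniq M x e1 e2 : perfect_matching M ->
  e1 \in M -> e2 \in M -> covers e1 x -> covers e2 x -> e1 = e2.
Proof.
move/perfect_matchingP/(_ x) => [e [_ _ Ue]] e1M e2M c1 c2.
by rewrite (Ue _ e1M c1) (Ue _ e2M c2).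
Qed.

(* Vertex [(~~ b, k)] cannot be matched by rung [k], which meets rail [b k], nor
   by the rail on its left, whose partner rail would also meet rail [b k]. *)
Let pm_rail_step M b (k : 'I_m) : perfect_matching M -> rail b k \in M ->
  (forall k' : 'I_m, (k' : nat).+1 = k -> rail (~~ b) k' \in M -> rail b k' \in M) ->
  rail (~~ b) k \in M.
Proof.
move=> pmM rM IHk; set k0 : 'I_m.+1 := inord k.
have k0k : (k0 : nat) = k by rewrite /k0 inordK // ltnW // ltnS ltn_ord.
have crM : covers (rail b k) (b, k0) by rewrite covers_rail eqxx k0k eqxx.
have rail_case b' k' : rail b' k' \in M -> covers (rail b' k') (~~ b, k0) ->
    rail (~~ b) k \in M.
  move=> r'M; rewrite covers_rail k0k => /andP[/eqP Eb /orP[/eqP kk' | /eqP kk']].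
    by subst b'; have -> : k = k' by apply: val_inj; rewrite /= kk'.
  subst b'; have r'M' := IHk k' (esym kk') r'M.
  have cr'M : covers (rail b k') (b, k0) by rewrite covers_rail eqxx k0k kk' eqxx orbT.
  have [_ k'k] := rail_inj (pm_covers_uniq pmM r'M' rM cr'M crM).
  by move: kk'; rewrite k'k; lia.
have [e [eM ce _]] := perfect_matchingP _ pmM (~~ b, k0).
case: e eM ce => [[k'|k']|k''] eM ce; [exact: (rail_case true k') | exact: (rail_case false k') |].
have crung : covers (inr k'' : ledge m) (b, k0) by move: ce; rewrite !covers_rung.
move: (pm_covers_uniq pmM eM rM crung crM) => /eqP.
by rewrite eq_sym (negbTE (rail_neq_rung _ _ _)).
Qed.

Lemma pm_railC M b (k : 'I_m) : perfect_matching M ->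
  (rail b k \in M) = (rail (~~ b) k \in M).
Proof.
move=> pmM.
suff railC n b' (k' : 'I_m) : (k' : nat) = n -> rail b' k' \in M -> rail (~~ b') k' \in M.
  by apply/idP/idP => [|/(railC _ _ k erefl)]; [exact: railC | rewrite negbK].
elim: n b' k' => [|n IHn] b' k' k'n rM; apply: (pm_rail_step pmM rM) => k'' k''k.
  by rewrite k'n in k''k.
by move/IHn; rewrite negbK; apply; rewrite k'n in k''k; case: k''k.
Qed.

Definition top_rails M : {set 'I_m} := [set k | rail true k \in M].

Definition rail_matching H : {set ledge m} :=
  [set e : ledge m | match e with
                     | inl (inl k) | inl (inr k) => k \in H
                     | inr k0 => [forall h in H, ((h : nat) != k0) && ((h : nat).+1 != k0)]
                     end].

Lemma rail_matching_rail H b k : (rail b k \in rail_matching H) = (k \in H).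
Proof. by case: b; rewrite inE. Qed.

Lemma rail_matchingK H : top_rails (rail_matching H) = H.
Proof. by apply/setP => k; rewrite !inE. Qed.

Lemma pm_rungE M (k0 : 'I_m.+1) : perfect_matching M ->
  (inr k0 \in M) = [forall h in top_rails M, ((h : nat) != k0) && ((h : nat).+1 != k0)].
Proof.
move=> pmM; apply/idP/forall_inP => [rM h | free].
  rewrite inE => hM; have crung : covers (inr k0 : ledge m) (true, k0) by rewrite covers_rung.
  have : ~~ covers (rail true h) (true, k0).
    apply: contraNN (rail_neq_rung true h k0) => chM.
    by apply/eqP; exact: pm_covers_uniq pmM hM rM chM crung.
  by rewrite covers_rail eqxx negb_or ![(k0 : nat) == _]eq_sym.
have [e [eM ce _]] := perfect_matchingP _ pmM (true, k0).
case: e eM ce => [[k'|k']|k''] eM ce.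
- have /free : k' \in top_rails M by rewrite inE.
  by move: ce; rewrite -[inl _]/(rail true k') covers_rail /= => /orP[] /eqP ->; rewrite eqxx ?andbF.
- by move: ce; rewrite -[inl _]/(rail false k') covers_rail.
by move: ce; rewrite covers_rung => /eqP ->.
Qed.

Lemma top_railsK M : perfect_matching M -> rail_matching (top_rails M) = M.
Proof.
move=> pmM; apply/setP => -[[k|k]|k0]; rewrite inE.
- by rewrite inE.
- by rewrite inE (pm_railC true k pmM).
by rewrite pm_rungE.
Qed.

Lemma perfect_rail_matching H : perfect_matching (rail_matching H) = no_adjacent H.
Proof.
apply/idP/idP => [pmH | /no_adjacentP nH].
  apply/no_adjacentP => h1 h2 h1H h2H; apply/eqP => h12.
  set k0 : 'I_m.+1 := inord h2.
  have k0k : (k0 : nat) = h2 by rewrite /k0 inordK // ltnW // ltnS ltn_ord.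
  have c1 : covers (rail true h1) (true, k0) by rewrite covers_rail k0k -h12 !eqxx orbT.
  have c2 : covers (rail true h2) (true, k0) by rewrite covers_rail k0k !eqxx.
  have r1 : rail true h1 \in rail_matching H by rewrite rail_matching_rail.
  have r2 : rail true h2 \in rail_matching H by rewrite rail_matching_rail.
  have [_ h21] := rail_inj (pm_covers_uniq pmH r1 r2 c1 c2).
  by move: h12; rewrite h21; lia.
apply/perfect_matchingP => -[b k0].
have [h /andP[hH hk0] | free] :=
  pickP (fun h : 'I_m => (h \in H) && (((h : nat) == k0) || ((h : nat).+1 == k0))).
  exists (rail b h); split.
  - by rewrite rail_matching_rail.
  - by rewrite covers_rail eqxx ![(k0 : nat) == _]eq_sym.
  have rail_case b' h' : rail b' h' \in rail_matching H -> covers (rail b' h') (b, k0) ->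
      rail b' h' = rail b h.
    rewrite rail_matching_rail covers_rail => h'H /andP[/eqP -> h'k0].
    have /eqP h1 := nH _ _ hH h'H; have /eqP h2 := nH _ _ h'H hH.
    by congr rail; apply: ord_inj; move: hk0 h'k0 => /orP[] /eqP ? /orP[] /eqP ?; lia.
  case=> [[h'|h']|k'] eM ce; [exact: (rail_case true h') | exact: (rail_case false h') |].
  move: eM ce; rewrite inE covers_rung => /forall_inP/(_ h hH) + /eqP k0k'.
  by rewrite -k0k'; case/orP: hk0 => ->; rewrite ?andbF.
exists (inr k0); split.
- rewrite inE; apply/forall_inP => h hH.
  by move: (free h); rewrite hH /= => /negbT; rewrite negb_or.
- by rewrite covers_rung.
have no_rail b' h' : rail b' h' \in rail_matching H -> ~~ covers (rail b' h') (b, k0).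
  rewrite rail_matching_rail covers_rail => h'H; apply/negP => /andP[_ h'k0].
  by move: (free h'); rewrite /= h'H; case/orP: h'k0 => /eqP ->; rewrite eqxx ?orbT.
case=> [[h'|h']|k'] eM ce.
- by move: ce; rewrite (negbTE (no_rail true h' eM)).
- by move: ce; rewrite (negbTE (no_rail false h' eM)).
by move: ce; rewrite covers_rung => /eqP ->.
Qed.

Lemma prod_rail_matching (R : comNzRingType) (a b : 'I_m -> R) H :
  \prod_(e in rail_matching H) lweight a b e = \prod_(k in H) (a k * b k).
Proof.
rewrite big_mkcond !big_sumType /= big_split /=.
rewrite [X in _ * X]big1 ?mulr1 => [|k _]; last by case: ifP.
by congr (_ * _); rewrite [RHS]big_mkcond; apply: eq_bigr => k _; rewrite inE.
Qed.

Lemma Pladder_no_adjacent (R : comNzRingType) (a b : 'I_m -> R) :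
  Pladder a b = \sum_(H : {set 'I_m} | no_adjacent H) \prod_(k in H) (a k * b k).
Proof.
rewrite /Pladder (reindex_onto rail_matching top_rails) => [|M]; last exact: top_railsK.
apply: eq_big => [H | H _]; last exact: prod_rail_matching.
by rewrite rail_matchingK eqxx andbT perfect_rail_matching.
Qed.

End LadderMatchings.

Definition tile_weight (R : comNzRingType) (y : int -> R) (s : int) (k : nat) : R :=
  y (s + k%:Z + 1) * y (s + k%:Z - 1).

Lemma Ptiles_continuant (R : comNzRingType) (y : int -> R) s m :
  Ptiles y s m = continuant (tile_weight y s) m.+1.
Proof. by rewrite /Ptiles Pladder_no_adjacent (sum_no_adjacent _ (tile_weight y s)). Qed.

Section TileDeterminant.
Variables (R : comNzRingType) (y : int -> R).

Let tile_prod (s : int) (n : nat) := \prod_(k < n) y (s + k%:Z).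

Lemma tile_weight_det s m :
  continuant (tile_weight y s) m.+4 * continuant (tile_weight y (s + 2)) m
  - continuant (tile_weight y s) m.+2 * continuant (tile_weight y (s + 2)) m.+2
  = (-1) ^+ m * (tile_prod s m.+1 * tile_prod (s + 2) m.+1).
Proof.
have shift2 n : continuant (fun k => tile_weight y s k.+2) n
              = continuant (tile_weight y (s + 2)) n.
  by apply: eq_continuant => k _; rewrite /tile_weight; congr (y _ * y _); lia.
rewrite -!shift2 continuant_det -mulrA; congr (_ * _).
rewrite /tile_prod -big_split big_ord_recl /=; congr (_ * _).
  by rewrite /tile_weight mulrC; congr (y _ * y _); lia.
by apply: eq_bigr => k _; rewrite /tile_weight mulrC; congr (y _ * y _); rewrite /bump /=; lia.
Qed.

Lemma tile_prod_shift s n :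
  tile_prod s n.+4 * tile_prod (s + 2) n = tile_prod s n.+2 * tile_prod (s + 2) n.+2.
Proof.
rewrite /tile_prod !big_ord_recr /=.
have -> : s + n.+2%:Z = s + 2 + n%:Z by lia.
have -> : s + n.+3%:Z = s + 2 + n.+1%:Z by lia.
ring.
Qed.

End TileDeterminant.

Section IndependentVariables.
Variables (F : fieldType) (y : int -> F).
Hypothesis y_indep : alg_indep y.

Lemma alg_indep_neq0 t : y t != 0.
Proof.
have idx_inj : injective (fun _ : 'I_1 => t) by move=> a b _; rewrite !ord1.
have X_neq0 : ('X_ord0 : {mpoly int[1]}) != 0.
  by apply: contraTneq isT => X0; have := mevalXU (fun _ : 'I_1 => 1%:Z) ord0; rewrite X0 raddf0.
by have := y_indep idx_inj X_neq0; rewrite mmapX mmap1U.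
Qed.

(* [continuant (tile_weight y s) n] is the image of the continuant of a
   polynomial family, which is nonzero since it evaluates to 1 at 0. *)
Lemma continuant_tile_weight_neq0 s n : continuant (tile_weight y s) n != 0.
Proof.
pose idx (k : 'I_n.+2) : int := s - 1 + (k : nat)%:Z.
have idx_inj : injective idx by move=> a b; rewrite /idx => ab; apply: ord_inj; lia.
pose X k : {mpoly int[n.+2]} := 'X_(inord k).
pose p := continuant (fun k => X k.+2 * X k) n.
have p_neq0 : p != 0.
  apply: contraTneq isT => p0; have := congr1 (meval (fun=> 0)) p0.
  rewrite continuant_rmorph (eq_continuant (d := fun=> 0)) ?continuant_zero ?raddf0 //.
  by move=> k _; rewrite /= rmorphM /= !mevalXU mul0r.
have := y_indep idx_inj p_neq0.
rewrite continuant_rmorph (eq_continuant (d := tile_weight y s)) // => k kn.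
rewrite /= rmorphM /= !mmapX !mmap1U /idx /tile_weight !inordK; try lia.
by congr (y _ * y _); lia.
Qed.

Lemma prod_y_neq0 s n : \prod_(k < n) y (s + k%:Z) != 0.
Proof. by apply/prodf_neq0 => k _; exact: alg_indep_neq0. Qed.

Definition ladder_ratio (s : int) (n : nat) : F :=
  Ptiles y s n / \prod_(k < n) y (s + k%:Z).

Lemma ladder_ratio_neq0 s n : ladder_ratio s n != 0.
Proof.
by rewrite mulf_neq0 ?invr_eq0 ?Ptiles_continuant ?continuant_tile_weight_neq0 ?prod_y_neq0.
Qed.

Lemma ladder_ratio1 s : ladder_ratio s 1 = (y (s - 1) * y (s + 1) + 1) / y s.
Proof.
rewrite /ladder_ratio Ptiles_continuant continuantSS big_ord1 /tile_weight addr0.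
by rewrite continuant0 continuant1 mulr1 addrC [y (s + 1) * _]mulrC.
Qed.

Lemma ladder_ratio3 s :
  ladder_ratio s 3 * y (s + 1) = ladder_ratio s 1 * ladder_ratio (s + 2) 1 + 1.
Proof.
have := tile_weight_det y s 0; rewrite /ladder_ratio !Ptiles_continuant.
rewrite continuant0 mulr1 expr0 mul1r => /(canRL (subrK _)) ->.
rewrite !big_ord_recr !big_ord0 /= !mul1r !addr0.
have ys := alg_indep_neq0 s; have ys1 := alg_indep_neq0 (s + 1).
have ys2 := alg_indep_neq0 (s + 2).
by field; rewrite ys ys1 ys2.
Qed.

Lemma ladder_ratioSSSS s n :
  ladder_ratio s n.+4 * ladder_ratio (s + 2) n
  = ladder_ratio s n.+2 * ladder_ratio (s + 2) n.+2 - (-1) ^+ n.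
Proof.
rewrite /ladder_ratio !Ptiles_continuant !mulf_div tile_prod_shift.
have := tile_weight_det y s n.+1 => /(canRL (subrK _)) ->.
by rewrite exprS; field; rewrite !prod_y_neq0.
Qed.

Lemma yclSS j i :
  ycl y j.+2 i = (ycl y j.+1 (i - 1) * ycl y j.+1 (i + 1) + 1) / ycl y j i.
Proof. by rewrite /ycl /=; case: (Ypair y j). Qed.

Lemma ycl_ladder_ratio j i : ycl y j.+1 i = ladder_ratio (i - j%:Z) (2 * j).+1.
Proof.
have ycl1 t : ycl y 1 t = ladder_ratio t 1 by rewrite ladder_ratio1.
elim/nat_ind2: j i => [||j IHj IHSj] i.
- by rewrite subr0 ycl1.
- rewrite yclSS !ycl1 /ycl /=.
  have -> : i + 1 = i - 1 + 2 by lia.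
  by rewrite -[i in y i](subrK 1) -ladder_ratio3 mulfK ?alg_indep_neq0.
set s := i - j.+2%:Z; have rec := ladder_ratioSSSS s (2 * j).+1.
rewrite exprS -signr_odd mul2n odd_double expr0 mulr1 opprK -mul2n in rec.
rewrite yclSS !IHSj IHj !mulnS !add2n.
have -> : i - 1 - j.+1%:Z = s by rewrite /s; lia.
have -> : i + 1 - j.+1%:Z = s + 2 by rewrite /s; lia.
have -> : i - j%:Z = s + 2 by rewrite /s; lia.
by rewrite -rec mulfK ?ladder_ratio_neq0.
Qed.

End IndependentVariables.

Theorem lemma2 (F : fieldType) (y : int -> F) (hy : alg_indep y)
  (i : int) (j : nat) (hj : (0 < j)%N) :
  ycl y j i =
    Ptiles y (i - j%:Z + 1) (2 * j).-1
    / \prod_(k < (2 * j).-1) y (i - j%:Z + 1 + (k : nat)%:Z).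
Proof.
case: j hj => [//|j] _.
have -> : i - j.+1%:Z + 1 = i - j%:Z by lia.
by rewrite (ycl_ladder_ratio hy) mulnS add2n.
Qed.
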